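(* Let $\nu>0$. For every $x>0$, $$\lim_{t\to\infty} t^{\nu}\,E^{(\nu)}_x\Big[\Big(\frac{1}{R_t}\Big)^{2\nu}\Big]=\frac{1}{2^{\nu}\Gamma(\nu+1)}.$$
   Context: For $\mu\in\mathbb{R}$ and $x>0$, $P^{(\mu)}_x$ denotes the law on $\Omega=C([0,\infty);\mathbb{R})$ of the Bessel process with index $\mu$ (dimension $2(\mu+1)$) started at $x$, and $E^{(\mu)}_x$ the corresponding expectation; $R$ is the coordinate process on $\Omega$. $\Gamma$ is the gamma function. *)

From HB Require Import structures.
From mathcomp Require Import all_boot all_order all_algebra.
From mathcomp Require Import all_classical all_reals all_analysis.
Set Implicit Arguments. Unset Strict Implicit. Unset Printing Implicit Defensive.
Import Order.TTheory GRing.Theory Num.Theory.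
Import numFieldNormedType.Exports.
Local Open Scope classical_set_scope.
Local Open Scope ring_scope.

Section Bessel.
Variable R : realType.

Definition Gamma (s : R) : R :=
  fine (\int[@lebesgue_measure R]_(u in `]0%R, +oo[)
          ((u `^ (s - 1)) * expR (- u))%:E)%E.

Definition besselI (nu z : R) : R :=
  limn (series (fun k : nat =>
     (z / 2) `^ (2 * k%:R + nu) / ((k`!)%:R * Gamma (k%:R + nu + 1)))).

(* Transition density (w.r.t. Lebesgue measure on ]0,+oo[) of the Bessel
   process of index nu >= 0 started at x > 0, at time t > 0
   (Revuz-Yor, Ch. XI, (1.6)):
   p_t(x,y) = (y/t) (y/x)^nu exp(-(x^2+y^2)/(2t)) I_nu(x y / t). *)
Definition bessel_density (nu x t y : R) : R :=
  (y / t) * (y / x) `^ nu * expR (- (x ^+ 2 + y ^+ 2) / (2 * t))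
  * besselI nu (x * y / t).

(* E^(nu)_x [ f(R_t) ] for a nonnegative measurable f, computed from the
   law of R_t under P^(nu)_x (extended-real valued). *)
Definition bessel_expect (nu x t : R) (f : R -> R) : \bar R :=
  (\int[@lebesgue_measure R]_(y in `]0%R, +oo[)
      (f y * bessel_density nu x t y)%:E)%E.

End Bessel.

From HB Require Import structures.
From mathcomp Require Import all_boot all_order all_algebra.
From mathcomp Require Import all_classical all_reals all_analysis.
From mathcomp Require Import measurable_realfun.
From mathcomp.algebra_tactics Require Import ring lra.
Set Implicit Arguments.
Unset Strict Implicit.
Unset Printing Implicit Defensive.
Import Order.TTheory GRing.Theory Num.Theory.
Import numFieldNormedType.Exports.
Local Open Scope classical_set_scope.
Local Open Scope ring_scope.

(* Keeping the leading term of the series of I_nu and bounding 1/Gamma(s) by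
   e^2 for s >= 1 gives, with q = (z/2)^2,
     1/Gamma(nu+1) <= I_nu(z) / (z/2)^nu <= 1/Gamma(nu+1) + e^2 q e^q.
   At z = x y / t the powers of y cancel:
     y^(-2 nu) p_t(x,y) = (2t)^(-nu) e^(-x^2/2t) rho_t(y) I_nu(z) / (z/2)^nu,
   where rho_t(y) = (y/t) e^(-y^2/2t) is the Rayleigh density, of total mass 1.
   For t >= 2x^2 the Gaussian factor of rho_t absorbs e^q, so that
   rho_t(y) q e^q <= (4x^2/t) rho_2t(y).  Integrating, t^nu E_x[R_t^(-2nu)] lies
   between e^(-x^2/2t) / (2^nu Gamma(nu+1)) and that plus O(1/t), and both
   bounds tend to 1 / (2^nu Gamma(nu+1)). *)

Section ge0_le_integral_nonmeas.
Context d (T : measurableType d) (R : realType) (mu : {measure set T -> \bar R}).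

(* No measurability is assumed: that of [besselI] is never established. *)
Lemma ge0_le_integral_nonmeas (D : set T) (f g : T -> \bar R) :
  (forall y, D y -> (0 <= f y)%E) -> (forall y, D y -> (f y <= g y)%E) ->
  (\int[mu]_(y in D) f y <= \int[mu]_(y in D) g y)%E.
Proof.
move=> f0 fg.
have g0 y : D y -> (0 <= g y)%E by move=> Dy; exact: le_trans (f0 _ Dy) (fg _ Dy).
rewrite (ge0_integralE mu f0) (ge0_integralE mu g0).
apply: ereal_sup_le => _ [h hf <-]; exists h => //= y.
apply: le_trans (hf y) _; rewrite /patch; case: ifP => // /[!inE] Dy.
exact: fg.
Qed.
End ge0_le_integral_nonmeas.

Section rayleigh.
Variable R : realType.
Notation mu := (@lebesgue_measure R).

Definition rayleigh (s y : R) : R := y / s * expR (- (y ^+ 2 / (2 * s))).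

Lemma rayleigh_ge0 s y : 0 < s -> 0 <= y -> 0 <= rayleigh s y.
Proof. by move=> s0 y0; rewrite mulr_ge0 ?divr_ge0 ?expR_ge0 // ltW. Qed.

Let gauss (s y : R) : R := expR (- (y ^+ 2 / (2 * s))).

Let continuous_gauss s : continuous (gauss s).
Proof.
move=> y; apply: continuous_comp; last exact: continuous_expR.
by apply: cvgN; apply: cvgMr_tmp; rewrite expr2; apply: cvgM; exact: cvg_id.
Qed.

Lemma continuous_rayleigh s : continuous (rayleigh s).
Proof.
by move=> y; apply: cvgM; [apply: cvgMr_tmp; exact: cvg_id | exact: continuous_gauss].
Qed.

Lemma measurable_rayleigh s (D : set R) : measurable_fun D (rayleigh s).
Proof.
by apply: measurable_funTS; exact: continuous_measurable_fun (@continuous_rayleigh s).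
Qed.

Let is_derive_gauss (s y : R) : 0 < s ->
  is_derive y 1 (fun y => - gauss s y) (rayleigh s y).
Proof.
move=> s0; rewrite /rayleigh /gauss; apply: is_derive_eq.
rewrite /GRing.scale /=; field; exact: lt0r_neq0.
Qed.

Lemma integral_rayleigh s : 0 < s ->
  (\int[mu]_(y in `]0%R, +oo[) (rayleigh s y)%:E = 1)%E.
Proof.
move=> s0.
rewrite integral_itv_obnd_cbnd; last first.
  by apply/measurable_EFinP; exact: measurable_rayleigh.
rewrite (@ge0_continuous_FTC2y _ _ (fun y => - gauss s y) _ 0).
- by rewrite /gauss /= expr0n /= mul0r oppr0 expR0 opprK add0e.
- by move=> y; apply: rayleigh_ge0.
- by move=> y; apply: continuous_subspaceT; exact: continuous_rayleigh.
- rewrite -oppr0; apply: cvgN.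
  apply: (cvg_comp _ _ _ (@cvgr_expR R)).
  by apply: gt0_cvgMly; [rewrite invr_gt0 mulr_gt0 | exact: cvgr_expr2].
- by move=> y _; apply: ex_derive; exact: is_derive_gauss.
- by apply: cvg_at_right_filter; apply: cvgN; exact: continuous_gauss.
- by move=> y _; rewrite derive1E; apply: derive_val; exact: is_derive_gauss.
Qed.

Lemma integral_scaled_rayleigh k s : 0 <= k -> 0 < s ->
  (\int[mu]_(y in `]0%R, +oo[) (k * rayleigh s y)%:E = k%:E)%E.
Proof.
move=> k0 s0; under eq_integral do rewrite EFinM.
rewrite ge0_integralZl_EFin ?integral_rayleigh ?mule1 //.
- by move=> y /=; rewrite in_itv /= andbT => y0; rewrite lee_fin rayleigh_ge0 // ltW.
- by apply/measurable_EFinP; exact: measurable_rayleigh.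
Qed.
End rayleigh.

Section Gamma_bounds.
Variable R : realType.
Notation mu := (@lebesgue_measure R).

Lemma Gamma_ge0 (s : R) : 0 <= Gamma s.
Proof.
rewrite /Gamma fine_ge0 // integral_ge0 // => u _.
by rewrite lee_fin mulr_ge0 ?powR_ge0 ?expR_ge0.
Qed.

Lemma invGamma_ge0 (s : R) : 0 <= (Gamma s)^-1.
Proof. by rewrite invr_ge0 Gamma_ge0. Qed.

(* If the Gamma integral diverges, [Gamma s] is [fine +oo = 0] and so is its
   inverse. *)
Lemma invGamma_le_expR2 (s : R) : 1 <= s -> (Gamma s)^-1 <= expR 2.
Proof.
move=> s1.
set v := (\int[mu]_(u in `]0%R, +oo[) ((u `^ (s - 1)) * expR (- u))%:E)%E.
have v_ge : ((expR (-2))%:E <= v)%E.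
  have -> : (expR (-2))%:E =
      (\int[mu]_(u in `]0%R, +oo[) ((expR (-2))%:E * (\1_`[1%R, 2%R] u)%:E))%E.
    rewrite ge0_integralZl_EFin //; last exact/measurable_EFinP/measurable_indic.
    rewrite integral_indic // setIidl; last first.
      by move=> u /=; rewrite !in_itv/= => /andP[u1 _]; apply/andP; split => //; lra.
    have := @lebesgue_measure_itv R `[1%R, 2%R].
    rewrite /= lte_fin ltr1n -EFinB => ->; rewrite -EFinM; congr _%:E; lra.
  apply: ge0_le_integral_nonmeas => u _.
    by rewrite -EFinM lee_fin mulr_ge0 ?expR_ge0.
  rewrite /= -EFinM lee_fin indicE.
  have [|_] := boolP (u \in _); last by rewrite mulr0 mulr_ge0 ?expR_ge0 ?powR_ge0.
  rewrite inE /= in_itv /= => /andP[u1 u2]; rewrite mulr1 -[expR (-2)]mul1r.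
  rewrite ler_pM ?expR_ge0 //; last by rewrite ler_expR; lra.
  by rewrite -[X in X <= _](powRr0 u) ler_powR //; lra.
rewrite /Gamma -/v; move: v_ge; case: v => [r| |] //=; last by rewrite invr0 expR_ge0.
rewrite lee_fin => r_ge.
have r0 : 0 < r by apply: lt_le_trans r_ge; rewrite expR_gt0.
by rewrite -[expR 2]invrK -expRN ler_pV2 ?inE ?unitfE ?gt_eqF ?expR_gt0.
Qed.
End Gamma_bounds.

Lemma series_exp_coeff_le_expR {R : realType} n (q : R) :
  0 <= q -> series (exp_coeff q) n <= expR q.
Proof.
move=> q0; apply: nondecreasing_cvgn_le; last exact: is_cvg_series_exp_coeff.
by apply: nondecreasing_series => k _ _; exact: exp_coeff_ge0.
Qed.

Section besselI_bounds.
Variable R : realType.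
Implicit Types nu z : R.

Definition besselI_term nu z (k : nat) : R :=
  (z / 2) `^ (2 * k%:R + nu) / ((k`!)%:R * Gamma (k%:R + nu + 1)).

Lemma besselIE nu z : besselI nu z = limn (series (besselI_term nu z)).
Proof. by []. Qed.

Lemma besselI_term_ge0 nu z k : 0 <= besselI_term nu z k.
Proof. by rewrite divr_ge0 ?powR_ge0 // mulr_ge0 ?Gamma_ge0. Qed.

Lemma besselI_term0 nu z :
  besselI_term nu z 0 = (z / 2) `^ nu * (Gamma (nu + 1))^-1.
Proof. by rewrite /besselI_term mulr0 !add0r fact0 mul1r. Qed.

Lemma besselI_termE nu z k : 0 < z ->
  besselI_term nu z k =
  (z / 2) `^ nu * exp_coeff ((z / 2) ^+ 2) k / Gamma (k%:R + nu + 1).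
Proof.
move=> z0; have w0 : 0 <= z / 2 by rewrite divr_ge0 // ltW.
rewrite /besselI_term /exp_coeff /= addrC powRD; last first.
  by apply/implyP => _; rewrite gt_eqF // divr_gt0.
rewrite invfM !mulrA; congr (_ * _ * _ * _).
by rewrite -natrM powR_mulrn // exprM.
Qed.

Lemma besselI_termS_le nu z k : 0 <= nu -> 0 < z ->
  besselI_term nu z k.+1 <=
  (z / 2) `^ nu * expR 2 * (z / 2) ^+ 2 * exp_coeff ((z / 2) ^+ 2) k.
Proof.
move=> nu0 z0; set q := (z / 2) ^+ 2; have q0 : 0 <= q by exact: sqr_ge0.
have coeffS : exp_coeff q k.+1 <= q * exp_coeff q k.
  have -> : exp_coeff q k.+1 = k.+1%:R^-1 * (q * exp_coeff q k).
    by rewrite /exp_coeff /= factS natrM invfM exprS; ring.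
  apply: ler_piMl; first exact: mulr_ge0 q0 (exp_coeff_ge0 k q0).
  by rewrite invf_le1 ?ler1n ?ltr0n.
have Ginv : (Gamma (k.+1%:R + nu + 1))^-1 <= expR 2.
  by apply: invGamma_le_expR2; have := ler0n R k.+1; lra.
rewrite besselI_termE // -/q -mulrA.
rewrite [leRHS](_ : _ = (z / 2) `^ nu * ((q * exp_coeff q k) * expR 2)); last by ring.
rewrite ler_wpM2l ?powR_ge0 //.
by apply: ler_pM; rewrite ?exp_coeff_ge0 ?invr_ge0 ?Gamma_ge0.
Qed.

Lemma nondecreasing_series_besselI nu z :
  nondecreasing_seq (series (besselI_term nu z)).
Proof. by apply: nondecreasing_series => k _ _; exact: besselI_term_ge0. Qed.

Lemma series_besselI_le nu z n : 0 <= nu -> 0 < z ->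
  series (besselI_term nu z) n <=
  (z / 2) `^ nu *
  ((Gamma (nu + 1))^-1 + expR 2 * ((z / 2) ^+ 2 * expR ((z / 2) ^+ 2))).
Proof.
move=> nu0 z0; set q := (z / 2) ^+ 2; have q0 : 0 <= q by exact: sqr_ge0.
apply: (le_trans (@nondecreasing_series_besselI nu z _ _ (leqnSn n))).
rewrite /series /= big_nat_recl // besselI_term0 mulrDr lerD2l 2!mulrA.
apply: (@le_trans _ _
  (\sum_(0 <= j < n) (z / 2) `^ nu * expR 2 * q * exp_coeff q j)).
  by apply: ler_sum => j _; exact: besselI_termS_le.
rewrite -mulr_sumr ler_wpM2l //; last exact: series_exp_coeff_le_expR.
exact: mulr_ge0 (mulr_ge0 (powR_ge0 _ _) (expR_ge0 _)) q0.
Qed.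

Lemma is_cvg_series_besselI nu z : 0 <= nu -> 0 < z ->
  cvgn (series (besselI_term nu z)).
Proof.
move=> nu0 z0; apply: nondecreasing_is_cvgn; first exact: nondecreasing_series_besselI.
by eexists => _ [n _ <-]; exact: series_besselI_le.
Qed.

Lemma besselI_ge nu z : 0 <= nu -> 0 < z ->
  (Gamma (nu + 1))^-1 <= besselI nu z / (z / 2) `^ nu.
Proof.
move=> nu0 z0; rewrite ler_pdivlMr ?powR_gt0 ?divr_gt0 // mulrC -besselI_term0.
have := nondecreasing_cvgn_le (@nondecreasing_series_besselI nu z)
  (is_cvg_series_besselI nu0 z0) 1.
by rewrite /series /= big_nat1.
Qed.

Lemma besselI_le nu z : 0 <= nu -> 0 < z ->
  besselI nu z / (z / 2) `^ nu <=
  (Gamma (nu + 1))^-1 + expR 2 * ((z / 2) ^+ 2 * expR ((z / 2) ^+ 2)).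
Proof.
move=> nu0 z0; rewrite ler_pdivrMr ?powR_gt0 ?divr_gt0 // mulrC besselIE.
apply: limr_le; first exact: is_cvg_series_besselI.
by apply: nearW => n; exact: series_besselI_le.
Qed.
End besselI_bounds.

Lemma mul_expR_le {R : realType} (c d y : R) :
  0 <= c -> c <= d -> 0 < d -> 0 <= y ->
  c * y * expR (c * y) <= c / d * expR (2 * d * y).
Proof.
move=> c0 cd d0 y0.
have lin : c * y <= c / d * expR (d * y).
  rewrite [leLHS](_ : _ = c / d * (d * y)); last by field; exact: lt0r_neq0.
  apply: ler_wpM2l; first exact: divr_ge0 c0 (ltW d0).
  by have := expR_ge1Dx (d * y); lra.
have expo : expR (c * y) <= expR (d * y) by rewrite ler_expR ler_wpM2r.
rewrite (_ : 2 * d * y = d * y + d * y); last by ring.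
by rewrite expRD mulrA ler_pM ?expR_ge0 // mulr_ge0.
Qed.

Lemma rayleigh_mul_expR_le {R : realType} (s c y : R) :
  0 < s -> 0 <= c -> 8 * s * c <= 1 -> 0 <= y ->
  rayleigh s y * (c * y ^+ 2 * expR (c * y ^+ 2)) <=
  16 * s * c * rayleigh (2 * s) y.
Proof.
move=> s0 c0 sc y0.
have d0 : 0 < (8 * s)^-1 by rewrite invr_gt0 mulr_gt0.
have cd : c <= (8 * s)^-1.
  by rewrite -(ler_pM2l (_ : 0 < 8 * s)) ?mulr_gt0 // mulfV ?gt_eqF ?mulr_gt0.
have := mul_expR_le c0 cd d0 (sqr_ge0 y).
rewrite /rayleigh => h.
apply: le_trans (ler_wpM2l _ h) _.
  by rewrite mulr_ge0 ?divr_ge0 ?expR_ge0 // ltW.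
have E : expR (- (y ^+ 2 / (2 * (2 * s)))) =
    expR (- (y ^+ 2 / (2 * s))) * expR (2 / (8 * s) * y ^+ 2).
  by rewrite -expRD; congr expR; field; rewrite gt_eqF.
rewrite E invrK le_eqVlt; apply/orP; left; apply/eqP; field; exact: lt0r_neq0.
Qed.

Lemma cvgr_inv_pinfty {R : realType} : t^-1 @[t --> +oo] --> (0 : R).
Proof.
apply/gtr0_cvgV0; last exact: cvg_id.
by near=> t; near: t; apply: nbhs_pinfty_gt; rewrite num_real.
Unshelve. all: end_near. Qed.

Section bessel_expect_inverse_power.
Variables (R : realType) (nu x : R).
Hypotheses (nu_ge0 : 0 <= nu) (x_gt0 : 0 < x).

Let gaussx (t : R) : R := expR (- (x ^+ 2 / (2 * t))).

Lemma inverse_power_bessel_densityE t y : 0 < t -> 0 < y ->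
  (y^-1) `^ (2 * nu) * bessel_density nu x t y =
  ((2 * t)^-1) `^ nu * gaussx t * rayleigh t y *
  (besselI nu (x * y / t) / (x * y / t / 2) `^ nu).
Proof.
move=> t0 y0; set W := (x * y / t / 2) `^ nu.
have W0 : W != 0 by rewrite gt_eqF // powR_gt0 // !divr_gt0 ?mulr_gt0.
have powE : (y^-1) `^ (2 * nu) * (y / x) `^ nu = ((2 * t)^-1) `^ nu / W.
  apply: (mulIf W0); rewrite divfK // /W powRrM powR_mulrn ?invr_ge0 ?ltW //.
  by rewrite -!powRM ?mulr_ge0 ?divr_ge0 ?invr_ge0 ?ltW //; congr (_ `^ _); field;
    rewrite !gt_eqF.
have expE : expR (- (x ^+ 2 + y ^+ 2) / (2 * t)) =
    gaussx t * expR (- (y ^+ 2 / (2 * t))).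
  by rewrite -expRD; congr expR; field; rewrite gt_eqF.
rewrite /bessel_density /rayleigh expE.
transitivity ((y^-1) `^ (2 * nu) * (y / x) `^ nu * (y / t) *
  (gaussx t * expR (- (y ^+ 2 / (2 * t)))) * besselI nu (x * y / t)); first by ring.
by rewrite powE; ring.
Qed.

Let K (t : R) : R := ((2 * t)^-1) `^ nu * gaussx t.

Let K_ge0 t : 0 <= K t.
Proof. by rewrite mulr_ge0 ?powR_ge0 ?expR_ge0. Qed.

Lemma inverse_power_bessel_density_ge t y : 0 < t -> 0 < y ->
  K t * (Gamma (nu + 1))^-1 * rayleigh t y <=
  (y^-1) `^ (2 * nu) * bessel_density nu x t y.
Proof.
move=> t0 y0; rewrite inverse_power_bessel_densityE // -/(K t) mulrAC.
apply: ler_wpM2l; first exact: mulr_ge0 (K_ge0 t) (rayleigh_ge0 t0 (ltW y0)).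
by apply: besselI_ge => //; rewrite divr_gt0 ?mulr_gt0.
Qed.

Lemma inverse_power_bessel_density_le t y : 0 < t -> 2 * x ^+ 2 <= t -> 0 < y ->
  (y^-1) `^ (2 * nu) * bessel_density nu x t y <=
  K t * (Gamma (nu + 1))^-1 * rayleigh t y +
  K t * expR 2 * (4 * x ^+ 2 / t) * rayleigh (2 * t) y.
Proof.
move=> t0 xt y0; rewrite inverse_power_bessel_densityE // -/(K t).
set c := x ^+ 2 / (4 * t ^+ 2).
have c0 : 0 <= c by rewrite divr_ge0 ?sqr_ge0 // mulr_ge0 ?sqr_ge0.
have qE : (x * y / t / 2) ^+ 2 = c * y ^+ 2 by rewrite /c; field; rewrite gt_eqF.
have tail := @rayleigh_mul_expR_le _ t c y t0 c0.
have {}tail : rayleigh t y * (c * y ^+ 2 * expR (c * y ^+ 2)) <=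
    4 * x ^+ 2 / t * rayleigh (2 * t) y.
  rewrite (_ : 4 * x ^+ 2 / t = 16 * t * c); last by rewrite /c; field; rewrite gt_eqF.
  apply: tail (ltW y0); rewrite /c (_ : 8 * t * _ = 2 * x ^+ 2 / t); last first.
    by field; rewrite gt_eqF.
  by rewrite ler_pdivrMr // mul1r.
apply: (@le_trans _ _ (K t * rayleigh t y * ((Gamma (nu + 1))^-1 +
    expR 2 * ((x * y / t / 2) ^+ 2 * expR ((x * y / t / 2) ^+ 2))))).
  apply: ler_wpM2l; first exact: mulr_ge0 (K_ge0 t) (rayleigh_ge0 t0 (ltW y0)).
  by apply: besselI_le => //; rewrite divr_gt0 ?mulr_gt0.
rewrite qE mulrDr [X in X + _]mulrAC lerD2l.
rewrite [leLHS](_ : _ = K t * expR 2 *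
  (rayleigh t y * (c * y ^+ 2 * expR (c * y ^+ 2)))); last by ring.
rewrite -[leRHS]mulrA; apply: ler_wpM2l => //.
exact: mulr_ge0 (K_ge0 t) (expR_ge0 _).
Qed.

Let inverse_power_density_ge0 t y : 0 < t -> `]0%R, +oo[%classic y ->
  (0 <= (K t * (Gamma (nu + 1))^-1 * rayleigh t y)%:E)%E.
Proof.
move=> t0; rewrite /= in_itv /= andbT => y0.
rewrite lee_fin; apply: mulr_ge0 (rayleigh_ge0 t0 (ltW y0)).
exact: mulr_ge0 (K_ge0 t) (invGamma_ge0 _).
Qed.

Lemma bessel_expect_inverse_power_ge t : 0 < t ->
  ((K t * (Gamma (nu + 1))^-1)%:E <=
   bessel_expect nu x t (fun y => (y^-1) `^ (2 * nu))%R)%E.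
Proof.
move=> t0; rewrite -(integral_scaled_rayleigh _ t0); last first.
  exact: mulr_ge0 (K_ge0 t) (invGamma_ge0 _).
apply: ge0_le_integral_nonmeas => y; first exact: inverse_power_density_ge0.
rewrite /= in_itv /= andbT => y0; rewrite lee_fin.
exact: inverse_power_bessel_density_ge.
Qed.

Lemma bessel_expect_inverse_power_le t : 0 < t -> 2 * x ^+ 2 <= t ->
  (bessel_expect nu x t (fun y => (y^-1) `^ (2 * nu))%R <=
   (K t * (Gamma (nu + 1))^-1 + K t * expR 2 * (4 * x ^+ 2 / t))%:E)%E.
Proof.
move=> t0 xt; set k1 := K t * _; set k2 := K t * _ * _.
have k1_ge0 : 0 <= k1 by exact: mulr_ge0 (K_ge0 t) (invGamma_ge0 _).
have k2_ge0 : 0 <= k2.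
  apply: mulr_ge0; first exact: mulr_ge0 (K_ge0 t) (expR_ge0 _).
  by rewrite divr_ge0 ?mulr_ge0 ?sqr_ge0 ?ltW.
have t2_gt0 : 0 < 2 * t by rewrite mulr_gt0.
rewrite EFinD -(integral_scaled_rayleigh k1_ge0 t0).
rewrite -(integral_scaled_rayleigh k2_ge0 t2_gt0).
rewrite -ge0_integralD //; first last.
- by apply/measurable_EFinP/measurable_funM => //; exact: measurable_rayleigh.
- move=> y /=; rewrite in_itv /= andbT => y0.
  by rewrite lee_fin mulr_ge0 // rayleigh_ge0 // ltW.
- by apply/measurable_EFinP/measurable_funM => //; exact: measurable_rayleigh.
- by move=> y; exact: inverse_power_density_ge0.
apply: ge0_le_integral_nonmeas => y Dy.
  apply: le_trans (inverse_power_density_ge0 t0 Dy) _.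
  move: Dy; rewrite /= in_itv /= andbT => y0.
  by rewrite lee_fin inverse_power_bessel_density_ge.
move: Dy; rewrite /= in_itv /= andbT => y0; rewrite -EFinD lee_fin.
exact: inverse_power_bessel_density_le.
Qed.

Let tpow_mul_K t : 0 < t -> t `^ nu * K t = (2 `^ nu)^-1 * gaussx t.
Proof.
move=> t0; rewrite mulrA -powRM ?invr_ge0 ?mulr_ge0 ?ltW //.
rewrite (_ : t * (2 * t)^-1 = 2^-1); last by field; rewrite gt_eqF.
by rewrite -powR_inv1 // powRAC powR_inv1 ?powR_ge0.
Qed.

Let lowerb t : \bar R := ((2 `^ nu * Gamma (nu + 1))^-1 * gaussx t)%:E.
Let upperb t : \bar R := ((2 `^ nu * Gamma (nu + 1))^-1 * gaussx t +
  (2 `^ nu)^-1 * expR 2 * (4 * x ^+ 2) * (gaussx t / t))%:E.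

Lemma bessel_expect_inverse_power_sandwich : \forall t \near +oo,
  (lowerb t <= (t `^ nu)%:E * bessel_expect nu x t (fun y => (y^-1) `^ (2 * nu))%R
   <= upperb t)%E.
Proof.
near=> t.
have t0 : 0 < t by near: t; apply: nbhs_pinfty_gt; rewrite num_real.
have xt : 2 * x ^+ 2 <= t by near: t; apply: nbhs_pinfty_ge; rewrite num_real.
have tpow_ge0 : (0 <= (t `^ nu)%:E)%E by rewrite lee_fin powR_ge0.
apply/andP; split.
  apply: le_trans (lee_wpmul2l tpow_ge0 (bessel_expect_inverse_power_ge t0)).
  by rewrite /lowerb -EFinM lee_fin mulrA tpow_mul_K // invfM mulrAC.
apply: le_trans (lee_wpmul2l tpow_ge0 (bessel_expect_inverse_power_le t0 xt)) _.
rewrite /upperb -EFinM lee_fin [leLHS](_ : _ = t `^ nu * K t *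
  ((Gamma (nu + 1))^-1 + expR 2 * (4 * x ^+ 2 / t))); last by ring.
by rewrite tpow_mul_K // invfM le_eqVlt; apply/orP; left; apply/eqP; ring.
Unshelve. all: end_near. Qed.

Let cvg_gaussx : gaussx t @[t --> +oo] --> (1 : R).
Proof.
have exponent0 : - (x ^+ 2 / (2 * t)) @[t --> +oo] --> (0 : R).
  rewrite -oppr0 -(mulr0 (x ^+ 2 / 2)); apply: cvgN.
  under eq_fun do rewrite invfM mulrA.
  by apply: cvgMl_tmp; exact: cvgr_inv_pinfty.
by rewrite -expR0; exact: cvg_comp exponent0 (@continuous_expR R 0).
Qed.

Lemma cvg_bessel_expect_lower_bound :
  lowerb t @[t --> +oo] --> ((2 `^ nu * Gamma (nu + 1))^-1)%:E.
Proof.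
apply: cvg_EFin; first exact: nearW.
by rewrite -[X in _ --> X]mulr1; apply: cvgMl_tmp; exact: cvg_gaussx.
Qed.

Lemma cvg_bessel_expect_upper_bound :
  upperb t @[t --> +oo] --> ((2 `^ nu * Gamma (nu + 1))^-1)%:E.
Proof.
apply: cvg_EFin; first exact: nearW.
rewrite -[X in _ --> X]addr0 -[X in _ --> X + _]mulr1.
rewrite -(mulr0 ((2 `^ nu)^-1 * expR 2 * (4 * x ^+ 2))).
apply: cvgD; apply: cvgMl_tmp; first exact: cvg_gaussx.
by rewrite -(mul1r 0); apply: cvgM; [exact: cvg_gaussx | exact: cvgr_inv_pinfty].
Qed.
End bessel_expect_inverse_power.

Theorem lemma2p1 (R : realType) (nu : R) (hnu : 0 < nu) (x : R) (hx : 0 < x) :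
  ((fun t : R => ((t `^ nu)%R%:E
       * bessel_expect nu x t (fun y => ((y ^-1) `^ (2 * nu))%R))%E)
     @ +oo --> ((2 `^ nu * Gamma (nu + 1))^-1)%:E)%classic.
Proof.
exact: squeeze_cvge (bessel_expect_inverse_power_sandwich (ltW hnu) hx) _
  (@cvg_bessel_expect_lower_bound R nu x) (@cvg_bessel_expect_upper_bound R nu x).
Qed.
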